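(* Let $V$ be a finite-dimensional vector space over an algebraically closed field $\mathbf{k}$ of characteristic $p$, of dimension $\mathbf{n}\ge3$, equipped with a bilinear form $(,)$ and a quadratic form $Q$ such that either (i) $Q=0$, $(x,x)=0$ for all $x$, and $V^\perp=0$; or (ii) $Q\ne0$, $(x,y)=Q(x+y)-Q(x)-Q(y)$ for all $x,y$, and $Q|_{V^\perp}$ is injective. Let $\kappa\in\{0,1\}$ with $\mathbf{n}-\kappa$ even, $n=(\mathbf{n}-\kappa)/2$. Let $p_1\ge p_2\ge\dots\ge p_\sigma\ge1$ be integers with $p_1+\dots+p_\sigma=n$, and if $\kappa=1$ set $p_{\sigma+1}=1/2$. Let $g\in Is(V)$ and let $(w^t_i)_{t\in[1,\sigma+\kappa],i\in\mathbb{Z}}$ be a $(g,p_* )$-adapted collection. Then $\{w^x_i;\ x\in[1,\sigma+\kappa],\ i\in[0,2p_x-1]\}$ is a basis of $V$.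
   Context: $V^\perp=\{x\in V;(x,V)=0\}$. $Is(V)$ is the group of $g\in GL(V)$ with $(gx,gy)=(x,y)$ and $Q(gx)=Q(x)$ for all $x,y$. A collection of vectors $w^t_i\in V$ ($t\in[1,\sigma+\kappa]$, $i\in\mathbb{Z}$) is $(g,p_* )$-adapted if: (a) $w^t_{i+1}=gw^t_i$ for all $t,i$; (b) for $t\in[1,\sigma]$, $(w^t_i,w^t_j)=0$ if $|i-j|<p_t$ and $(w^t_i,w^t_j)=1$ if $j-i=p_t$; (c) $(w^t_i,w^r_j)=0$ if $0\le i-j+p_r<2p_t$ and $1\le t<r\le\sigma$; (d) if $\kappa=1$, $(w^{\sigma+1}_i,w^{\sigma+1}_i)=2$ for all $i$; (e) if $\kappa=1$, $(w^t_i,w^{\sigma+1}_j)=0$ whenever $0\le i-j<2p_t$ and $1\le t\le\sigma$; (f) $Q(w^t_i)=0$ for $t\in[1,\sigma]$, and $Q(w^{\sigma+1}_i)=1$ if $\kappa=1$. *)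

From HB Require Import structures.
From mathcomp Require Import all_boot all_order all_algebra all_field.
Set Implicit Arguments. Unset Strict Implicit. Unset Printing Implicit Defensive.
Import Order.TTheory GRing.Theory Num.Theory.
Local Open Scope ring_scope.

Definition is_bilinear_form (k : fieldType) (V : vectType k) (B : V -> V -> k) :=
  forall (a : k) (x y z : V),
    B (a *: x + y) z = a * B x z + B y z /\ B z (a *: x + y) = a * B z x + B z y.

Definition is_quadratic_form (k : fieldType) (V : vectType k) (Q : V -> k) :=
  (forall (a : k) (x : V), Q (a *: x) = a ^+ 2 * Q x) /\
  is_bilinear_form (fun x y => Q (x + y) - Q x - Q y).

Definition in_perp (k : fieldType) (V : vectType k) (B : V -> V -> k) (x : V) :=
  forall y : V, B x y = 0.

Definition in_Is (k : fieldType) (V : vectType k) (B : V -> V -> k) (Q : V -> k)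
  (g : {linear V -> V}) :=
  bijective g /\ (forall x y, B (g x) (g y) = B x y) /\ (forall x, Q (g x) = Q x).

(* (g, p_* )-adapted collection w^t_i, t in [1, sigma + kappa], i in Z.
   p t is p_t for t in [1, sigma]; p_{sigma+1} = 1/2 is handled explicitly. *)
Definition adapted (k : fieldType) (V : vectType k) (B : V -> V -> k) (Q : V -> k)
  (g : V -> V) (sigma kappa : nat) (p : nat -> nat) (w : nat -> int -> V) :=
  (* (a) *)
  (forall t (i : int), (1 <= t <= sigma + kappa)%N -> w t (i + 1) = g (w t i)) /\
  (* (b) *)
  (forall t (i j : int), (1 <= t <= sigma)%N ->
      (`|i - j| < (p t)%:Z -> B (w t i) (w t j) = 0) /\
      (j - i = (p t)%:Z -> B (w t i) (w t j) = 1)) /\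
  (* (c) *)
  (forall t r (i j : int), (1 <= t)%N -> (t < r)%N -> (r <= sigma)%N ->
      0 <= i - j + (p r)%:Z -> i - j + (p r)%:Z < 2 * (p t)%:Z ->
      B (w t i) (w r j) = 0) /\
  (* (d) *)
  (kappa = 1%N -> forall i : int, B (w sigma.+1 i) (w sigma.+1 i) = 2%:R) /\
  (* (e) *)
  (kappa = 1%N -> forall t (i j : int), (1 <= t <= sigma)%N ->
      0 <= i - j -> i - j < 2 * (p t)%:Z -> B (w t i) (w sigma.+1 j) = 0) /\
  (* (f) *)
  (forall t (i : int), (1 <= t <= sigma)%N -> Q (w t i) = 0) /\
  (kappa = 1%N -> forall i : int, Q (w sigma.+1 i) = 1).

(* The family {w^x_i ; x in [1, sigma+kappa], i in [0, 2 p_x - 1]}, as a sequence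
   (with 2 p_{sigma+1} - 1 = 0 when kappa = 1). *)
Definition adapted_family (k : fieldType) (V : vectType k) (sigma kappa : nat)
  (p : nat -> nat) (w : nat -> int -> V) : seq V :=
  flatten [seq [seq w t (Posz i) | i <- iota 0 (2 * p t)] | t <- iota 1 sigma]
  ++ (if kappa == 1%N then [:: w sigma.+1 0] else [::]).

From HB Require Import structures.
From mathcomp Require Import all_boot all_order all_algebra all_field zify.
Import Order.TTheory GRing.Theory Num.Theory.
Local Open Scope ring_scope.

(* The family has 2 (p_1 + ... + p_sigma) + kappa = dim V members, so it suffices
   that it is free.  By (b), each w^t_i with t <= sigma pairs to +-1 with a partner
   w^t_(i +- p_t), and by (b), (c), (e) the linear form (w^t_(i +- p_t), -) kills every
   other member of larger or equal rank, for a suitable lexicographic ranking in which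
   w^(sigma+1)_0 comes last; the latter is nonzero since Q (w^(sigma+1)_0) = 1.  Such a
   triangular family is free. *)

Lemma leq_mulD_lexi (K a b c d : nat) : (b < K)%N -> (d < K)%N ->
  (a * K + b <= c * K + d)%N = (a < c)%N || (a == c) && (b <= d)%N.
Proof. by move=> bK dK; apply/idP/idP; nia. Qed.

Lemma ltn_mulD_lexi (K a b c d : nat) : (b < K)%N -> (d < K)%N ->
  (a * K + b < c * K + d)%N = (a < c)%N || (a == c) && (b < d)%N.
Proof. by move=> bK dK; apply/idP/idP; nia. Qed.

Lemma notin_span_scalar {k : fieldType} {V : vectType k} (phi : V -> k)
    (X : seq V) (u : V) :
  scalar phi -> phi u != 0 -> {in X, forall y, phi y = 0} -> u \notin <<X>>%VS.
Proof.
move=> phiL phiu_neq0 phiX; apply: contra phiu_neq0.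
move=> /(@coord_span _ _ _ (in_tuple X)) ->.
pose f : {linear V -> k^o} := HB.pack phi (GRing.isLinear.Build _ _ _ _ phi phiL).
rewrite -[phi _]/(f _) linear_sum big1 // => i _.
by rewrite linearZ /= phiX ?scaler0 // mem_nth.
Qed.

Lemma free_rank_triangular {k : fieldType} {V : vectType k} {I : eqType}
    (v : I -> V) (rank : I -> nat) (s : seq I) :
  uniq s ->
  {in s, forall x,
    v x \notin <<[seq v y | y <- s & (y != x) && (rank x <= rank y)%N]>>%VS} ->
  free (map v s).
Proof.
move=> s_uniq v_indep; pose le_rank := [rel x y : I | (rank x <= rank y)%N].
have le_rank_total : total le_rank by move=> x y; apply: leq_total.
have le_rank_trans : transitive le_rank by move=> y x z; apply: leq_trans.
rewrite -(perm_free (perm_map v (permEl (perm_sort le_rank s)))).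
have : {subset sort le_rank s <= s} by move=> x; rewrite mem_sort.
have : sorted le_rank (sort le_rank s) by apply: sort_sorted.
have : uniq (sort le_rank s) by rewrite sort_uniq.
elim: (sort le_rank s) => [|x s' IH]; first by rewrite /free span_nil dimv0.
rewrite cons_uniq => /andP[x_s' s'_uniq] s'_sorted s'_sub.
have s'_sub_s : {subset s' <= s}.
  by move=> y y_s'; apply: s'_sub; rewrite inE y_s' orbT.
rewrite free_cons IH ?(path_sorted s'_sorted) // andbT.
apply: contra (v_indep x (s'_sub x (mem_head x s'))); apply/subvP/sub_span.
move=> _ /mapP[y y_s' ->]; apply: map_f.
rewrite mem_filter s'_sub_s // andbT; apply/andP; split.
  by apply: contraNneq x_s' => <-.
exact: (allP (order_path_min le_rank_trans s'_sorted)).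
Qed.

Lemma alternating_form_skew {k : fieldType} {V : vectType k} {B : V -> V -> k} :
  is_bilinear_form B -> (forall x, B x x = 0) -> forall x y, B y x = - B x y.
Proof.
move=> hB Balt x y.
have BDl u u' z : B (u + u') z = B u z + B u' z.
  by have [+ _] := hB 1 u u' z; rewrite scale1r mul1r.
have BDr u u' z : B z (u + u') = B z u + B z u'.
  by have [_ +] := hB 1 u u' z; rewrite scale1r mul1r.
apply/eqP; rewrite -addr_eq0 addrC; apply/eqP.
by have := Balt (x + y); rewrite BDl !BDr !Balt add0r addr0.
Qed.

Section AdaptedFamily.

Context {k : fieldType} {V : vectType k} {B : V -> V -> k} {Q : V -> k}.
Context {g : V -> V} {sigma kappa : nat} {p : nat -> nat} {w : nat -> int -> V}.

Hypothesis hB : is_bilinear_form B.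
Hypothesis B_orth_sym : forall x y, B x y = 0 -> B y x = 0.
Hypothesis hQ : is_quadratic_form Q.
Hypothesis p_nonincr : forall t, (1 <= t)%N -> (t < sigma)%N -> (p t.+1 <= p t)%N.
Hypothesis hw : adapted B Q g sigma kappa p w.

Definition adapted_index : seq (nat * nat) :=
  flatten [seq [seq (t, i) | i <- iota 0 (2 * p t)] | t <- iota 1 sigma]
  ++ (if kappa == 1%N then [:: (sigma.+1, 0%N)] else [::]).

Definition adapted_vec (x : nat * nat) : V := w x.1 x.2.

Lemma adapted_familyE : adapted_family sigma kappa p w = map adapted_vec adapted_index.
Proof.
rewrite /adapted_family /adapted_index map_cat map_flatten -map_comp.
congr (_ ++ _); last by case: (kappa == 1%N).
by congr flatten; apply: eq_map => t /=; rewrite -map_comp.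
Qed.

Lemma mem_adapted_index t i : (t, i) \in adapted_index ->
  (1 <= t <= sigma)%N && (i < 2 * p t)%N \/ kappa = 1%N /\ (t, i) = (sigma.+1, 0%N).
Proof.
rewrite mem_cat => /orP[/flatten_mapP[r] | ].
  by rewrite mem_iota => r_range /mapP[j]; rewrite mem_iota => j_range [-> ->]; left; lia.
by case: eqP => // ->; rewrite inE => /eqP ->; right.
Qed.

Lemma adapted_index_uniq : uniq adapted_index.
Proof.
rewrite cat_uniq; apply/and3P; split.
- apply: allpairs_uniq_dep => [|t _|]; rewrite ?iota_uniq //.
  by move=> [t i] [r j] _ _ /= [-> ->].
- case: eqP => //= _; rewrite orbF; apply/flatten_mapP => -[t].
  by rewrite mem_iota => t_range /mapP[i _ [ti _]]; lia.
- by case: (kappa == 1%N).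
Qed.

Lemma size_adapted_index :
  size adapted_index = (2 * \sum_(1 <= t < sigma.+1) p t + (kappa == 1%N))%N.
Proof.
rewrite size_cat size_flatten /shape -map_comp sumnE big_map big_distrr /=.
congr (_ + _)%N; last by case: (kappa == 1%N).
rewrite /index_iota subSS subn0; apply: eq_bigr => t _.
by rewrite /= size_map size_iota.
Qed.

Lemma p_nonincr_le r t : (1 <= r)%N -> (r <= t <= sigma)%N -> (p t <= p r)%N.
Proof.
move=> r_ge1; elim: t => [|t IH] /andP[]; first lia.
rewrite leq_eqVlt => /orP[/eqP <- //|r_lt_t] t_lt.
by apply: leq_trans (p_nonincr _ _ _) (IH _); lia.
Qed.

(* Upper halves (i >= p_t) come first, by decreasing i - p_t and then increasing t;
   lower halves next, by increasing i and then decreasing t; w^(sigma+1)_0 last.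
   Since i - p_t and i are bounded by p_1 in the respective halves, this is a
   lexicographic order in base sigma + 1. *)
Definition adapted_partner (x : nat * nat) : nat :=
  (if p x.1 <= x.2 then x.2 - p x.1 else x.2 + p x.1)%N.

Definition adapted_rank (x : nat * nat) : nat :=
  (if x.1 == sigma.+1 then (2 * p 1).+1 * sigma.+1
   else if p x.1 <= x.2 then (p 1 - (x.2 - p x.1)) * sigma.+1 + x.1
   else (p 1 + 1 + x.2) * sigma.+1 + (sigma - x.1))%N.

Lemma adapted_orth t r (a j : nat) :
  (1 <= t <= sigma)%N -> (1 <= r <= sigma)%N ->
  t = r /\ (a < j + p t)%N /\ (j < a + p t)%N \/
  (t < r)%N /\ (j <= a + p r)%N /\ (a + p r < j + 2 * p t)%N \/
  (r < t)%N /\ (a <= j + p t)%N /\ (j + p t < a + 2 * p r)%N ->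
  B (w t a) (w r j) = 0.
Proof.
have [_ [hb [hc _]]] := hw.
move=> t_range r_range [[<- ?]|[[? ?]|[? ?]]].
- by apply: (proj1 (hb t a j t_range)); lia.
- by apply: hc; lia.
- by apply: B_orth_sym; apply: hc; lia.
Qed.

Lemma adapted_orth_top t (a : nat) : kappa = 1%N ->
  (1 <= t <= sigma)%N -> (a < 2 * p t)%N -> B (w t a) (w sigma.+1 0) = 0.
Proof. by have [_ [_ [_ [_ [he _]]]]] := hw; move=> k1 ? ?; apply: he => //; lia. Qed.

Lemma adapted_partner_pairing t i : (1 <= t <= sigma)%N ->
  B (w t (adapted_partner (t, i))) (w t i) != 0.
Proof.
have [_ [hb _]] := hw; move=> t_range; rewrite /adapted_partner /=.
case: leqP => [pt_le_i|i_lt_pt].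
  by rewrite (proj2 (hb t _ _ t_range)) ?oner_eq0 //; lia.
apply: contraTneq (oner_neq0 k) => /B_orth_sym <-.
by rewrite (proj2 (hb t _ _ t_range)) ?eqxx //; lia.
Qed.

(* (d) would only give this outside characteristic 2. *)
Lemma adapted_top_neq0 : kappa = 1%N -> w sigma.+1 0 != 0.
Proof.
have [_ [_ [_ [_ [_ [_ hf]]]]]] := hw; move=> /hf Qw1.
have Q0 : Q 0 = 0 by have [/(_ 0 0) + _] := hQ; rewrite scale0r expr0n mul0r.
by apply: contraTneq (oner_neq0 k) => w0; rewrite -(Qw1 0) w0 Q0 eqxx.
Qed.

Lemma adapted_rank_lt_top y : y \in adapted_index -> y != (sigma.+1, 0%N) ->
  (adapted_rank y < adapted_rank (sigma.+1, 0%N))%N.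
Proof.
case: y => r j /mem_adapted_index[/andP[r_range j_lt]|[_ ->]]; last by rewrite eqxx.
move=> _; have p_r : (p r <= p 1)%N by apply: p_nonincr_le.
rewrite /adapted_rank /= eqxx; have -> : (r == sigma.+1) = false by lia.
rewrite -[X in (_ < X)%N]addn0; case: (leqP (p r) j) => ?; rewrite ltn_mulD_lexi; lia.
Qed.

Lemma adapted_rank_triangular t i y : (1 <= t <= sigma)%N -> (i < 2 * p t)%N ->
  y \in adapted_index -> y != (t, i) -> (adapted_rank (t, i) <= adapted_rank y)%N ->
  B (w t (adapted_partner (t, i))) (adapted_vec y) = 0.
Proof.
case: y => r j t_range i_lt.
case/mem_adapted_index=> [/andP[r_range j_lt]|[k1 [-> ->]]]; last first.
  move=> _ _; apply: adapted_orth_top => //.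
  by rewrite /adapted_partner /=; case: (leqP (p t) i); lia.
rewrite xpair_eqE negb_and /adapted_rank /adapted_partner /adapted_vec /= => ne.
have -> : (t == sigma.+1) = false by lia.
have -> : (r == sigma.+1) = false by lia.
have p_t : (p t <= p 1)%N by apply: p_nonincr_le.
have p_r : (p r <= p 1)%N by apply: p_nonincr_le.
move=> le_rank; apply: adapted_orth => //.
case: (ltngtP t r) => [lt_tr|lt_rt|eq_tr];
  [have : (p r <= p t)%N by apply: p_nonincr_le; lia
  |have : (p t <= p r)%N by apply: p_nonincr_le; lia
  |have := congr1 p eq_tr];
  by move: le_rank; case: (leqP (p t) i); case: (leqP (p r) j); rewrite leq_mulD_lexi; lia.
Qed.

Lemma free_adapted_family : free (adapted_family sigma kappa p w).
Proof.
rewrite adapted_familyE.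
apply: (@free_rank_triangular _ _ _ _ adapted_rank) adapted_index_uniq _.
move=> -[t i] /mem_adapted_index[/andP[t_range i_lt]|[k1 [-> ->]]].
  apply: (notin_span_scalar (B (w t (adapted_partner (t, i))))).
  - by move=> a u u'; case: (hB a u u' (w t (adapted_partner (t, i)))).
  - exact: adapted_partner_pairing.
  move=> ? /mapP[y]; rewrite mem_filter => /andP[/andP[y_neq_x le_rank] y_s] ->.
  exact: adapted_rank_triangular.
rewrite (@eq_in_filter _ _ pred0) ?filter_pred0 ?span_nil ?memv0 ?adapted_top_neq0 //.
move=> y y_s /=; apply/negP => /andP[y_neq_top le_rank].
by have := adapted_rank_lt_top _ y_s y_neq_top; rewrite ltnNge le_rank.
Qed.

End AdaptedFamily.

Theorem mainTheorem3 (k : closedFieldType) (V : vectType k)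
  (B : V -> V -> k) (Q : V -> k) (N : nat)
  (hB : is_bilinear_form B) (hQ : is_quadratic_form Q)
  (hdim : \dim (fullv : {vspace V}) = N) (hN : (3 <= N)%N)
  (hcase :
     ((forall x, Q x = 0) /\ (forall x, B x x = 0) /\
      (forall x, in_perp B x -> x = 0))
     \/
     ((exists x, Q x != 0) /\ (forall x y, B x y = Q (x + y) - Q x - Q y) /\
      (forall x y, in_perp B x -> in_perp B y -> Q x = Q y -> x = y)))
  (kappa : nat) (hkappa : (kappa <= 1)%N) (hpar : ~~ odd (N - kappa))
  (sigma : nat) (p : nat -> nat)
  (hp1 : forall t, (1 <= t <= sigma)%N -> (1 <= p t)%N)
  (hpdec : forall t, (1 <= t)%N -> (t < sigma)%N -> (p t.+1 <= p t)%N)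
  (hpsum : (\sum_(1 <= t < sigma.+1) p t)%N = ((N - kappa) %/ 2)%N)
  (g : {linear V -> V}) (hg : in_Is B Q g)
  (w : nat -> int -> V) (hw : adapted B Q g sigma kappa p w) :
  basis_of fullv (adapted_family sigma kappa p w).
Proof.
have B_orth_sym x y : B x y = 0 -> B y x = 0.
  case: hcase => [[_ [Balt _]]|[_ [BQ _]]] Bxy.
    by rewrite (alternating_form_skew hB Balt) Bxy oppr0.
  by rewrite BQ [y + x]addrC addrAC -BQ.
rewrite basisEfree (free_adapted_family hB B_orth_sym hQ hpdec hw) subvf hdim.
rewrite adapted_familyE size_map size_adapted_index hpsum.
by have := divn_eq (N - kappa) 2; rewrite modn2 (negbTE hpar); case: eqP; lia.
Qed.
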